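(* Let $\beta>0$, $\gamma>0$, $\alpha_I\in(0,1]$, $d\ge0$, and let $q$ be a probability measure on $(0,\infty)$ (absolutely continuous part plus finitely many atoms, finite mean $T_q$). Fix $r^\star>0$, let $\mathcal C_1=(0,r^\star]$, $\mathcal C_2=(r^\star,\infty)$, $p^i=q(\mathcal C_i)>0$, $q^i(I)=q(I\cap\mathcal C_i)/p^i$ with mean $T_{q^i}$. For $d>0$ set $$\mu^{\rm in}=\frac{d}{1-\hat q(d)},\quad \mu^{{\rm in},i}=\frac{d}{1-\hat q^i(d)},\quad \pi^i=p^i\frac{1-\hat q^i(d)}{1-\hat q(d)}\quad(i=1,2),$$ with $\hat\nu(d)=\int e^{-dr}\nu(dr)$, and for $d=0$ set $\mu^{\rm in}=1/T_q$, $\mu^{{\rm in},i}=1/T_{q^i}$, $\pi^i=p^iT_{q^i}/T_q$. Assume $\mu^{{\rm in},i}>0$, $i=1,2$. Let $x^\star$ be the nonnegative equilibrium of the single-class SIS equation $$\dot x=\alpha_I\mu^{\rm in}+\beta x(1-x)-(\gamma+\mu^{\rm in})x,$$ i.e. $x^\star=\frac1{2\beta}\Big[(\beta-\gamma-\mu^{\rm in})+\sqrt{(\beta-\gamma-\mu^{\rm in})^2+4\alpha_I\mu^{\rm in}\beta}\Big]$, and let $(x_1^\star,x_2^\star)$ with $x_1^\star,x_2^\star\ge0$ be an equilibrium of the two-class SIS system $$\dot x^i=\alpha_I\pi^i\mu^{{\rm in},i}+\beta(x^1+x^2)(\pi^i-x^i)-(\gamma+\mu^{{\rm in},i})x^i,\qquad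 i=1,2,$$ and $\omega^\star=x_1^\star+x_2^\star$. Then $x^\star>0$ and $\omega^\star>0$. Moreover, $x^\star<\omega^\star$ (respectively $x^\star>\omega^\star$, $x^\star=\omega^\star$) if and only if $\alpha_I<1-\frac{\gamma}{\beta}$ (respectively $\alpha_I>1-\frac\gamma\beta$, $\alpha_I=1-\frac\gamma\beta$).
   Context: Interpretation: $x$ is the proportion of infective inmates in the prison at population equilibrium when sentence-length structure is ignored; $x^i$ is the proportion (relative to the total prison population) of infective inmates with initial sentence length in class $\mathcal C_i$ (short/long sentences); $\alpha_I$ is the infective proportion among new inmates, $\beta$ the contact rate, $\gamma$ the recovery rate, $d$ the removal rate common to both classes. The case $d=0$ is defined by the stated limiting values. *)

From HB Require Import structures.
From mathcomp Require Import all_boot all_order all_algebra.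
From mathcomp Require Import all_classical all_reals all_analysis.
Set Implicit Arguments. Unset Strict Implicit. Unset Printing Implicit Defensive.
Import Order.TTheory GRing.Theory Num.Theory.
Import numFieldNormedType.Exports.
Local Open Scope classical_set_scope.
Local Open Scope ring_scope.

Section Defs.
Variable R : realType.
Variable q : probability R R.

Definition supported_on_pos : Prop := q [set x : R | x <= 0] = 0%E.

Definition ac_plus_finite_atoms : Prop :=
  exists (f : R -> R) (s : seq (R * R)),
    (forall x, 0 <= f x) /\ measurable_fun setT f /\
    forall A : set R, measurable A ->
      q A = (\int[lebesgue_measure]_(x in A) (f x)%:E +
             (\sum_(a <- s) a.2 * \1_A a.1)%:E)%E.

Definition finite_mean : Prop := q.-integrable setT (fun r => r%:E).

Definition cls (rs : R) (i : bool) : set R :=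
  if i then `]0, rs]%classic else `]rs, +oo[%classic.

Definition pcl (rs : R) (i : bool) : R := fine (q (cls rs i)).

Definition qhat (d : R) : R := Rintegral q setT (fun r => expR (- (d * r))).
Definition qhat_cl (rs : R) (i : bool) (d : R) : R :=
  Rintegral q (cls rs i) (fun r => expR (- (d * r))) / pcl rs i.

Definition Tq : R := Rintegral q setT (fun r => r).
Definition Tq_cl (rs : R) (i : bool) : R :=
  Rintegral q (cls rs i) (fun r => r) / pcl rs i.

Definition mu_in (d : R) : R :=
  if d == 0 then 1 / Tq else d / (1 - qhat d).
Definition mu_in_cl (rs : R) (i : bool) (d : R) : R :=
  if d == 0 then 1 / Tq_cl rs i else d / (1 - qhat_cl rs i d).
Definition pi_cl (rs : R) (i : bool) (d : R) : R :=
  if d == 0 then pcl rs i * Tq_cl rs i / Tq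
  else pcl rs i * (1 - qhat_cl rs i d) / (1 - qhat d).

End Defs.

Definition xstar (R : realType) (alphaI beta gamma mu : R) : R :=
  1 / (2 * beta) * ((beta - gamma - mu) +
    Num.sqrt ((beta - gamma - mu) ^+ 2 + 4 * alphaI * mu * beta)).

(* Write tau_i for the effective mean sentence of class i, namely
   (1 - \hat q^i(d)) / d, or T_{q^i} when d = 0.  Then mu^{in,i} = 1 / tau_i,
   pi^i = p^i tau_i / (p^1 tau_1 + p^2 tau_2) and mu^in = pi^1 mu^{in,1} +
   pi^2 mu^{in,2}.  Moreover tau_1 < tau_2, because the averaged function
   (1 - e^{-dr}) / d (or r) increases with the sentence length r.

   At a two-class equilibrium with total w, put a = beta w + gamma and
   K = beta w (1 - alpha) - alpha gamma.  Each class equation is linear in x^i,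
   with solution x^i = pi^i (alpha + K / (a + mu^{in,i})).  Hence w - alpha = K S
   with S = sum_i pi^i / (a + mu^{in,i}), and 1 - gamma/beta - alpha is a positive
   multiple of K.  The single-class right-hand side evaluated at w equals
   -K ((a + mu^in) S - 1).  This is a negative multiple of K, since
   (a + mu^in) S > 1 by Chebyshev's sum inequality.  The right-hand side is
   positive exactly on [0, x^star), so w - x^star has the sign of
   1 - gamma/beta - alpha. *)

From HB Require Import structures.
From mathcomp Require Import all_boot all_order all_algebra.
From mathcomp Require Import all_classical all_reals all_analysis.
From mathcomp Require Import measurable_realfun lra ring.
Set Implicit Arguments. Unset Strict Implicit. Unset Printing Implicit Defensive.
Import Order.TTheory GRing.Theory Num.Theory.
Import numFieldNormedType.Exports.
Local Open Scope classical_set_scope.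
Local Open Scope ring_scope.

Definition sis_rhs (R : pzRingType) (alpha beta gamma mu x : R) : R :=
  alpha * mu + beta * x * (1 - x) - (gamma + mu) * x.

Lemma sgr_sub_cmp (R : realDomainType) (x y u v : R) :
  Num.sg (y - x) = Num.sg (v - u) ->
  (x < y <-> u < v) /\ (y < x <-> v < u) /\ (x = y <-> u = v).
Proof.
move=> e; have eN : Num.sg (x - y) = Num.sg (u - v).
  by rewrite -[x - y]opprB -[u - v]opprB !sgrN e.
split; [|split].
- by rewrite -subr_gt0 -[u < v]subr_gt0 -!sgr_cp0 e.
- by rewrite -subr_gt0 -[v < u]subr_gt0 -!sgr_cp0 eN.
- split=> [xy|uv]; apply/eqP; rewrite eq_sym -subr_eq0 -sgr_cp0.
  + by rewrite -e xy subrr sgr0.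
  + by rewrite e uv subrr sgr0.
Qed.

Lemma sgr_sis_rhs (R : realType) (alpha beta gamma mu x : R) :
  0 < beta -> 0 < alpha -> 0 < mu -> 0 <= x ->
  Num.sg (sis_rhs alpha beta gamma mu x) = Num.sg (xstar alpha beta gamma mu - x).
Proof.
move=> beta_gt0 alpha_gt0 mu_gt0 x_ge0.
set b := beta - gamma - mu; set D := b ^+ 2 + 4 * alpha * mu * beta.
have D_gt_b2 : b ^+ 2 < D by rewrite /D ltrDl !mulr_gt0.
set s := Num.sqrt D.
have s2 : s ^+ 2 = D by rewrite sqr_sqrtr // (le_trans (sqr_ge0 b)) // ltW.
have s_gt_b : b < s by have s_ge0 : 0 <= s := sqrtr_ge0 D; nra.
(* The roots of the quadratic [sis_rhs] are [xstar] and [(b - s) / (2 beta) < 0]. *)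
have -> : sis_rhs alpha beta gamma mu x
    = (xstar alpha beta gamma mu - x) * (beta * x + (s - b) / 2)
      + (D - s ^+ 2) / (4 * beta).
  by rewrite /sis_rhs /xstar /s /D /b; field; rewrite gt_eqF.
rewrite s2 subrr mul0r addr0.
rewrite sgrM [Num.sg (beta * x + _)]gtr0_sg ?mulr1 //.
by apply: ltr_wpDl; [rewrite mulr_ge0 // ltW | rewrite divr_gt0 // subr_gt0].
Qed.

Lemma xstar_gt0 (R : realType) (alpha beta gamma mu : R) :
  0 < beta -> 0 < alpha -> 0 < mu -> 0 < xstar alpha beta gamma mu.
Proof.
move=> beta_gt0 alpha_gt0 mu_gt0.
have := sgr_sis_rhs gamma beta_gt0 alpha_gt0 mu_gt0 (lexx 0).
rewrite subr0 /sis_rhs !(mulr0, mul0r, addr0, subr0).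
rewrite [Num.sg (alpha * mu)]gtr0_sg; last exact: mulr_gt0.
by move/esym/eqP; rewrite sgr_cp0.
Qed.

Lemma sis_class_equilibriumE (R : fieldType) (alpha beta gamma w p m x : R) :
  beta * w + gamma + m != 0 ->
  alpha * p * m + beta * w * (p - x) - (gamma + m) * x = 0 ->
  x = p * (alpha + (beta * w * (1 - alpha) - alpha * gamma) / (beta * w + gamma + m)).
Proof.
move=> a_neq0 eq_x.
have -> : x = p * (alpha * m + beta * w) / (beta * w + gamma + m).
  apply: (mulIf a_neq0); rewrite mulfVK //.
  by apply/eqP; rewrite -subr_eq0; apply/eqP; rewrite -[RHS]oppr0 -eq_x; ring.
by field.
Qed.

Section TwoClassEquilibrium.
Variable R : realFieldType.
Variables alpha beta gamma m1 m2 p1 p2 x1 x2 : R.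
Hypotheses (beta_gt0 : 0 < beta) (gamma_gt0 : 0 < gamma) (alpha_gt0 : 0 < alpha).
Hypotheses (m1_gt0 : 0 < m1) (m2_gt0 : 0 < m2) (m1_neq_m2 : m1 != m2).
Hypotheses (p1_gt0 : 0 < p1) (p2_gt0 : 0 < p2) (p1Dp2 : p1 + p2 = 1).
Hypotheses (x1_ge0 : 0 <= x1) (x2_ge0 : 0 <= x2).
Hypothesis eq_x1 :
  alpha * p1 * m1 + beta * (x1 + x2) * (p1 - x1) - (gamma + m1) * x1 = 0.
Hypothesis eq_x2 :
  alpha * p2 * m2 + beta * (x1 + x2) * (p2 - x2) - (gamma + m2) * x2 = 0.

Let w := x1 + x2.
Let a := beta * w + gamma.
Let K := beta * w * (1 - alpha) - alpha * gamma.
Let S := p1 / (a + m1) + p2 / (a + m2).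
Let mu := p1 * m1 + p2 * m2.

Lemma two_class_total_gt0 : 0 < w.
Proof.
rewrite lt_neqAle addr_ge0 // andbT; apply/eqP => w0.
move/esym/eqP: w0; rewrite paddr_eq0 // => /andP[/eqP x1_0 /eqP x2_0].
move: eq_x1; rewrite x1_0 x2_0 !(mulr0, mul0r, subr0, addr0) => /eqP.
by rewrite !mulf_eq0 !gt_eqF.
Qed.

Let a_gt0 : 0 < a. Proof. by rewrite ltr_wpDl ?mulr_ge0 ?ltW // two_class_total_gt0. Qed.
Let am1_gt0 : 0 < a + m1. Proof. exact: addr_gt0. Qed.
Let am2_gt0 : 0 < a + m2. Proof. exact: addr_gt0. Qed.

Lemma two_class_total_sub_alpha : w - alpha = K * S.
Proof.
have x1E : x1 = p1 * (alpha + K / (a + m1)) :=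
  sis_class_equilibriumE (lt0r_neq0 am1_gt0) eq_x1.
have x2E : x2 = p2 * (alpha + K / (a + m2)) :=
  sis_class_equilibriumE (lt0r_neq0 am2_gt0) eq_x2.
rewrite {1}/w {1}x1E {1}x2E /S -[X in _ - X = _]mulr1 -p1Dp2.
by field; rewrite !gt_eqF.
Qed.

Lemma two_class_theta_sub_alpha :
  1 - gamma / beta - alpha = K * (S + (1 - S * a) / (beta * w)).
Proof.
have -> : K * (S + (1 - S * a) / (beta * w)) = K * S + (K - K * S * a) / (beta * w).
  by ring.
rewrite -two_class_total_sub_alpha /K /a; field.
by rewrite !lt0r_neq0 ?two_class_total_gt0.
Qed.

Lemma sgr_two_class_K : Num.sg K = Num.sg (1 - gamma / beta - alpha).
Proof.
have S_gt0 : 0 < S by rewrite addr_gt0 ?divr_gt0.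
have one_sub_Sa : 1 - S * a = p1 * m1 / (a + m1) + p2 * m2 / (a + m2).
  by rewrite /S -p1Dp2; field; rewrite !lt0r_neq0.
rewrite two_class_theta_sub_alpha sgrM [Num.sg (S + _)]gtr0_sg ?mulr1 //.
rewrite ltr_pwDl // one_sub_Sa divr_ge0 ?mulr_ge0 ?ltW ?two_class_total_gt0 //.
by rewrite addr_gt0 ?divr_gt0 ?mulr_gt0.
Qed.

(* Chebyshev's sum inequality: [m] and [1 / (a + m)] are oppositely ordered. *)
Lemma two_class_chebyshev_gt0 : 0 < (a + mu) * S - 1.
Proof.
have -> : (a + mu) * S - 1 = p1 * p2 * (m1 - m2) ^+ 2 / ((a + m1) * (a + m2)).
  rewrite /S /mu; have -> : p2 = 1 - p1 by rewrite -p1Dp2 addrAC subrr add0r.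
  by field; rewrite !lt0r_neq0.
apply: divr_gt0; last exact: mulr_gt0.
rewrite pmulr_rgt0; last exact: mulr_gt0.
by rewrite exprn_even_gt0 //= subr_eq0.
Qed.

Lemma two_class_sis_rhs : sis_rhs alpha beta gamma mu w = - K * ((a + mu) * S - 1).
Proof.
have -> : sis_rhs alpha beta gamma mu w = (a + mu) * (alpha - w) + K.
  by rewrite /sis_rhs /a /K; ring.
by rewrite -opprB two_class_total_sub_alpha; ring.
Qed.

Lemma sgr_sis_rhs_two_class_total :
  Num.sg (sis_rhs alpha beta gamma mu w) = Num.sg (alpha - (1 - gamma / beta)).
Proof.
rewrite two_class_sis_rhs sgrM [Num.sg (_ - 1)]gtr0_sg ?two_class_chebyshev_gt0 //.
by rewrite mulr1 sgrN sgr_two_class_K -sgrN opprB.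
Qed.

End TwoClassEquilibrium.

Definition two_class_split (R : numDomainType) (pi1 pi2 m1 m2 mu : R) : Prop :=
  [/\ 0 < pi1, 0 < pi2, pi1 + pi2 = 1, m1 != m2 & mu = pi1 * m1 + pi2 * m2].

Lemma two_class_split_mixture (R : realFieldType) (c p1 p2 t1 t2 t : R) :
  t = p1 * t1 + p2 * t2 -> 0 < c -> 0 < p1 -> 0 < p2 -> p1 + p2 = 1 ->
  0 < t1 -> 0 < t2 -> t1 != t2 ->
  two_class_split (p1 * t1 / t) (p2 * t2 / t) (c / t1) (c / t2) (c / t).
Proof.
move=> tE c_gt0 p1_gt0 p2_gt0 p1Dp2 t1_gt0 t2_gt0 t1_neq_t2.
have t_gt0 : 0 < t by rewrite tE addr_gt0 ?mulr_gt0.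
split; rewrite ?divr_gt0 ?mulr_gt0 //.
- by rewrite -mulrDl -tE divff // lt0r_neq0.
- by apply: contra_neq t1_neq_t2 => /(mulfI (lt0r_neq0 c_gt0)) /invr_inj.
- have -> : p1 * t1 / t * (c / t1) + p2 * t2 / t * (c / t2) = (p1 + p2) * c / t.
    by rewrite tE; field; rewrite -tE !lt0r_neq0.
  by rewrite p1Dp2 mul1r.
Qed.

Lemma sgr_two_class_total_sub_xstar (R : realType)
    (alpha beta gamma p1 p2 m1 m2 mu x1 x2 : R) :
  0 < beta -> 0 < gamma -> 0 < alpha -> 0 < m1 -> 0 < m2 ->
  two_class_split p1 p2 m1 m2 mu -> 0 <= x1 -> 0 <= x2 ->
  alpha * p1 * m1 + beta * (x1 + x2) * (p1 - x1) - (gamma + m1) * x1 = 0 ->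
  alpha * p2 * m2 + beta * (x1 + x2) * (p2 - x2) - (gamma + m2) * x2 = 0 ->
  Num.sg (x1 + x2 - xstar alpha beta gamma mu) = Num.sg (1 - gamma / beta - alpha).
Proof.
move=> beta_gt0 gamma_gt0 alpha_gt0 m1_gt0 m2_gt0 [p1_gt0 p2_gt0 p1Dp2 m1_neq_m2 ->].
move=> x1_ge0 x2_ge0 eq_x1 eq_x2.
have mu_gt0 : 0 < p1 * m1 + p2 * m2 by rewrite addr_gt0 ?mulr_gt0.
rewrite -opprB -[1 - _ - _]opprB !sgrN -sgr_sis_rhs ?addr_ge0 //.
by rewrite (sgr_sis_rhs_two_class_total beta_gt0 gamma_gt0 alpha_gt0 m1_gt0 m2_gt0).
Qed.

Lemma Rintegral_gt0 d (T : measurableType d) (R : realType)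
    (mu : {measure set T -> \bar R}) (A : set T) (g : T -> R) :
  measurable A -> mu.-integrable A (EFin \o g) ->
  (forall x, A x -> 0 < g x) -> (0 < mu A)%E -> 0 < Rintegral mu A g.
Proof.
move=> mA intg g_gt0 muA_gt0.
rewrite lt_neqAle Rintegral_ge0 ?andbT; last by move=> x /g_gt0 /ltW.
apply/negP => /eqP Rint_g0.
have int_abs_g0 : (\int[mu]_(x in A) `|(EFin \o g) x| = 0)%E.
  rewrite -[RHS]/(0%:E) Rint_g0 fineK ?(integrable_fin_num mA intg) //.
  by apply: eq_integral => x /set_mem Ax /=; rewrite ger0_norm // ltW // g_gt0.
have [N [mN muN0 AN]] :=
  (ae_eq_integral_abs mu mA (measurable_int mu intg)).1 int_abs_g0.
suff : mu A = 0%E by move=> muA0; rewrite muA0 ltxx in muA_gt0.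
apply: (subset_measure0 mA mN _ muN0) => x Ax; apply: AN => /= /(_ Ax) [].
by apply/eqP; rewrite gt_eqF // g_gt0.
Qed.

Lemma lt_Rintegral d (T : measurableType d) (R : realType)
    (mu : {measure set T -> \bar R}) (A : set T) (f g : T -> R) :
  measurable A -> mu.-integrable A (EFin \o f) -> mu.-integrable A (EFin \o g) ->
  (forall x, A x -> f x < g x) -> (0 < mu A)%E ->
  Rintegral mu A f < Rintegral mu A g.
Proof.
move=> mA intf intg fg muA_gt0; rewrite -subr_gt0 -RintegralB //.
apply: Rintegral_gt0 => // [|x /fg]; last by rewrite subr_gt0.
exact: eq_integrable (integrableB mA intg intf).
Qed.

Section ClassDecomposition.
Variables (R : realType) (q : probability R R) (rs : R).

Definition cls_mean (f : R -> R) (i : bool) : R :=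
  Rintegral q (cls rs i) f / pcl q rs i.

Lemma measurable_cls i : measurable (cls rs i).
Proof. by case: i; exact: measurable_itv. Qed.

Lemma q_cls i : q (cls rs i) = (pcl q rs i)%:E.
Proof. by rewrite /pcl fineK // fin_num_measure //; exact: measurable_cls. Qed.

Lemma Rintegral_cls_cst i k : Rintegral q (cls rs i) (fun=> k) = k * pcl q rs i.
Proof. by rewrite Rintegral_cst //; exact: measurable_cls. Qed.

Lemma cls_mean_le i f k : q.-integrable (cls rs i) (EFin \o f) -> 0 < pcl q rs i ->
  (forall x, cls rs i x -> f x <= k) -> cls_mean f i <= k.
Proof.
move=> intf p_gt0 fk; rewrite ler_pdivrMr // -Rintegral_cls_cst.
apply: le_Rintegral => //; first exact: measurable_cls.
by apply: finite_measure_integrable_cst; exact: measurable_cls.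
Qed.

Lemma cls_mean_ge i f k : q.-integrable (cls rs i) (EFin \o f) -> 0 < pcl q rs i ->
  (forall x, cls rs i x -> k <= f x) -> k <= cls_mean f i.
Proof.
move=> intf p_gt0 fk; rewrite ler_pdivlMr // -Rintegral_cls_cst.
apply: le_Rintegral => //; first exact: measurable_cls.
by apply: finite_measure_integrable_cst; exact: measurable_cls.
Qed.

Lemma cls_mean_lt i f k : q.-integrable (cls rs i) (EFin \o f) -> 0 < pcl q rs i ->
  (forall x, cls rs i x -> f x < k) -> cls_mean f i < k.
Proof.
move=> intf p_gt0 fk; rewrite ltr_pdivrMr // -Rintegral_cls_cst.
have q_gt0 : (0 < q (cls rs i))%E by rewrite q_cls lte_fin.
apply: lt_Rintegral q_gt0 => //; first exact: measurable_cls.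
by apply: finite_measure_integrable_cst; exact: measurable_cls.
Qed.

Lemma cls_mean_gt i f k : q.-integrable (cls rs i) (EFin \o f) -> 0 < pcl q rs i ->
  (forall x, cls rs i x -> k < f x) -> k < cls_mean f i.
Proof.
move=> intf p_gt0 fk; rewrite ltr_pdivlMr // -Rintegral_cls_cst.
have q_gt0 : (0 < q (cls rs i))%E by rewrite q_cls lte_fin.
apply: lt_Rintegral q_gt0 => //; first exact: measurable_cls.
by apply: finite_measure_integrable_cst; exact: measurable_cls.
Qed.

Hypotheses (rs_gt0 : 0 < rs) (q_supp : supported_on_pos q).

Lemma cls_setU : cls rs true `|` cls rs false = `]0, +oo[%classic.
Proof. by rewrite -itv_bndbnd_setU // bnd_simp ltW. Qed.

Lemma cls_disjoint : [disjoint cls rs true & cls rs false].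
Proof.
rewrite disj_set2E; apply/eqP/seteqP; split => x //= [].
by rewrite !in_itv /= andbT => /andP[_ x_le_rs] /(le_lt_trans x_le_rs); rewrite ltxx.
Qed.

Let q_nonpos0 : q `]-oo, 0]%classic = 0%E.
Proof. exact: q_supp. Qed.

Let setTD_nonpos : [set: R] `\` `]-oo, 0]%classic = `]0, +oo[%classic.
Proof. by rewrite setTD setCitvl. Qed.

Lemma pcl_add : pcl q rs true + pcl q rs false = 1.
Proof.
apply: EFin_inj; rewrite EFinD -!q_cls -measureU ?cls_setU; try exact: measurable_cls.
  by rewrite -setTD_nonpos setTD [LHS](probability_setC q) // q_nonpos0 sube0.
by move: cls_disjoint; rewrite disj_set2E => /eqP.
Qed.

Lemma Rintegral_cls_split f : measurable_fun setT f ->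
  q.-integrable `]0, +oo[%classic (EFin \o f) ->
  0 < pcl q rs true -> 0 < pcl q rs false ->
  Rintegral q setT f =
    pcl q rs true * cls_mean f true + pcl q rs false * cls_mean f false.
Proof.
move=> mf intf p1_gt0 p2_gt0.
have intT : q.-integrable setT (EFin \o f).
  rewrite (negligible_integrable _ _ _ q_nonpos0) ?setTD_nonpos //.
  exact/measurable_EFinP.
rewrite /cls_mean [pcl q rs true * _]mulrC [pcl q rs false * _]mulrC.
rewrite !divfK ?lt0r_neq0 // -Rintegral_setU ?cls_setU //.
- by rewrite /Rintegral (negligible_integral _ _ intT q_nonpos0) ?setTD_nonpos.
- exact: measurable_cls.
- exact: measurable_cls.
- exact: cls_disjoint.
Qed.

End ClassDecomposition.

Lemma measurable_expR_decay (R : realType) (d : R) :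
  measurable_fun setT (fun r : R => expR (- (d * r))).
Proof.
apply: measurableT_comp; first exact: measurable_expR.
by apply: measurableT_comp => //; exact: mulrl_measurable.
Qed.

Lemma integrable_expR_decay (R : realType) (q : probability R R) (d : R) : 0 <= d ->
  q.-integrable `]0, +oo[%classic (EFin \o (fun r => expR (- (d * r)))).
Proof.
move=> d_ge0; apply: measurable_bounded_integrable => //.
- by rewrite (le_lt_trans (probability_le1 _ _)) ?ltry.
- exact: measurable_funS (measurable_expR_decay d).
exists 1; split => // M M_gt1 x; rewrite /= in_itv andbT => x_gt0.
rewrite ger0_norm ?expR_ge0 // (le_trans _ (ltW M_gt1)) // expR_le1 oppr_le0.
by rewrite mulr_ge0 // ltW.
Qed.

Section RenewalRates.
Variables (R : realType) (q : probability R R) (rs : R).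
Hypotheses (rs_gt0 : 0 < rs) (q_supp : supported_on_pos q).
Hypotheses (p1_gt0 : 0 < pcl q rs true) (p2_gt0 : 0 < pcl q rs false).

Lemma two_class_split_mean : finite_mean q ->
  0 < mu_in_cl q rs true 0 -> 0 < mu_in_cl q rs false 0 ->
  two_class_split (pi_cl q rs true 0) (pi_cl q rs false 0)
    (mu_in_cl q rs true 0) (mu_in_cl q rs false 0) (mu_in q 0).
Proof.
move=> q_mean; rewrite /mu_in_cl /pi_cl /mu_in eqxx.
have int_id A : measurable A -> q.-integrable A (EFin \o id).
  by move=> mA; apply: integrableS q_mean.
have int_cls i := int_id _ (measurable_cls rs i).
have TqE :
    Tq q = pcl q rs true * Tq_cl q rs true + pcl q rs false * Tq_cl q rs false.
  by apply: Rintegral_cls_split => //; exact: int_id (measurable_itv _).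
have T1_le_rs : Tq_cl q rs true <= rs.
  apply: cls_mean_le (int_cls true) p1_gt0 _ => x.
  by rewrite /cls /= in_itv => /andP[].
have rs_lt_T2 : rs < Tq_cl q rs false.
  apply: cls_mean_gt (int_cls false) p2_gt0 _ => x.
  by rewrite /cls /= in_itv andbT.
move=> m1_gt0 m2_gt0.
have T1_gt0 : 0 < Tq_cl q rs true by rewrite -invr_gt0 -div1r.
have T2_gt0 : 0 < Tq_cl q rs false by rewrite -invr_gt0 -div1r.
apply: two_class_split_mixture TqE _ _ _ (pcl_add rs_gt0 q_supp) T1_gt0 T2_gt0 _
  => //.
by rewrite lt_eqF // (le_lt_trans T1_le_rs).
Qed.

Lemma two_class_split_laplace d : 0 < d ->
  0 < mu_in_cl q rs true d -> 0 < mu_in_cl q rs false d ->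
  two_class_split (pi_cl q rs true d) (pi_cl q rs false d)
    (mu_in_cl q rs true d) (mu_in_cl q rs false d) (mu_in q d).
Proof.
move=> d_gt0; rewrite /mu_in_cl /pi_cl /mu_in gt_eqF //.
have int_cls i : q.-integrable (cls rs i) (EFin \o (fun r => expR (- (d * r)))).
  apply: integrableS (integrable_expR_decay q (ltW d_gt0)) => //.
    exact: measurable_cls.
  by rewrite -(cls_setU rs_gt0); case: i; [exact: subsetUl | exact: subsetUr].
have qhatE : qhat q d =
    pcl q rs true * qhat_cl q rs true d + pcl q rs false * qhat_cl q rs false d.
  apply: Rintegral_cls_split => //; first exact: measurable_expR_decay.
  exact/integrable_expR_decay/ltW.
have one_sub_qhatE : 1 - qhat q d = pcl q rs true * (1 - qhat_cl q rs true d)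
                                    + pcl q rs false * (1 - qhat_cl q rs false d).
  by rewrite qhatE -[X in X - _](pcl_add rs_gt0 q_supp); ring.
have rs_le_Q1 : expR (- (d * rs)) <= qhat_cl q rs true d.
  apply: cls_mean_ge (int_cls true) p1_gt0 _ => x.
  rewrite /cls /= in_itv => /andP[_ x_le_rs].
  by rewrite ler_expR lerN2 ler_wpM2l // ltW.
have Q2_lt_rs : qhat_cl q rs false d < expR (- (d * rs)).
  apply: cls_mean_lt (int_cls false) p2_gt0 _ => x.
  rewrite /cls /= in_itv andbT => rs_lt_x.
  by rewrite ltr_expR ltrN2 ltr_pM2l.
move=> m1_gt0 m2_gt0.
have y1_gt0 : 0 < 1 - qhat_cl q rs true d.
  by move: m1_gt0; rewrite pmulr_rgt0 // invr_gt0.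
have y2_gt0 : 0 < 1 - qhat_cl q rs false d.
  by move: m2_gt0; rewrite pmulr_rgt0 // invr_gt0.
apply: two_class_split_mixture one_sub_qhatE d_gt0 _ _ (pcl_add rs_gt0 q_supp)
  y1_gt0 y2_gt0 _ => //.
rewrite lt_eqF //; lra.
Qed.

Lemma two_class_split_renewal d : 0 <= d -> finite_mean q ->
  0 < mu_in_cl q rs true d -> 0 < mu_in_cl q rs false d ->
  two_class_split (pi_cl q rs true d) (pi_cl q rs false d)
    (mu_in_cl q rs true d) (mu_in_cl q rs false d) (mu_in q d).
Proof.
rewrite le_eqVlt => /predU1P[<- q_mean | d_gt0 _].
  exact: two_class_split_mean.
exact: two_class_split_laplace.
Qed.

End RenewalRates.

Theorem proposition3p1 (R : realType) (beta gamma alphaI d rs : R)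
  (q : probability R R) (x1 x2 : R) :
  0 < beta -> 0 < gamma -> 0 < alphaI -> alphaI <= 1 -> 0 <= d ->
  supported_on_pos q -> ac_plus_finite_atoms q -> finite_mean q ->
  0 < rs ->
  0 < pcl q rs true -> 0 < pcl q rs false ->
  0 < mu_in_cl q rs true d -> 0 < mu_in_cl q rs false d ->
  0 <= x1 -> 0 <= x2 ->
  alphaI * pi_cl q rs true d * mu_in_cl q rs true d
    + beta * (x1 + x2) * (pi_cl q rs true d - x1)
    - (gamma + mu_in_cl q rs true d) * x1 = 0 ->
  alphaI * pi_cl q rs false d * mu_in_cl q rs false d
    + beta * (x1 + x2) * (pi_cl q rs false d - x2)
    - (gamma + mu_in_cl q rs false d) * x2 = 0 ->
  let xs := xstar alphaI beta gamma (mu_in q d) in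
  let om := x1 + x2 in
  0 < xs /\ 0 < om /\
  (xs < om <-> alphaI < 1 - gamma / beta) /\
  (xs > om <-> alphaI > 1 - gamma / beta) /\
  (xs = om <-> alphaI = 1 - gamma / beta).
Proof.
move=> beta_gt0 gamma_gt0 alpha_gt0 _ d_ge0 q_supp _ q_mean rs_gt0 p1_gt0 p2_gt0.
move=> m1_gt0 m2_gt0 x1_ge0 x2_ge0 eq_x1 eq_x2 xs om.
have classes :=
  two_class_split_renewal rs_gt0 q_supp p1_gt0 p2_gt0 d_ge0 q_mean m1_gt0 m2_gt0.
have [pi1_gt0 pi2_gt0 _ _ mu_def] := classes.
have mu_gt0 : 0 < mu_in q d by rewrite mu_def addr_gt0 ?mulr_gt0.
split; first exact: xstar_gt0.
split; first exact: two_class_total_gt0 alpha_gt0 m1_gt0 pi1_gt0 x1_ge0 x2_ge0 eq_x1.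
apply: sgr_sub_cmp.
exact: sgr_two_class_total_sub_xstar beta_gt0 gamma_gt0 alpha_gt0 m1_gt0 m2_gt0
  classes x1_ge0 x2_ge0 eq_x1 eq_x2.
Qed.
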